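(* Assume $\mathcal M$ satisfies extensibility. Let $\lambda^*\in\mathbb R^A$ with $\lambda^*>0$ and $p^*\in\mathbb R^G_{\ge0}$ be such that $(\lambda^*,p^* )$ is proper. Then there exists an optimal solution $X^*$ of $LP(\lambda^* )$ such that $\mathrm{pay}_i(X^*,p^* )=m_i$ for every $i\in A$.
   Context: A market $\mathcal M$: finite agent set $A$, finite goods set $G$ (supply $1$ each), finite index set $C$; agent $i$ has real coefficients $a_{ijk}$, requirements $r_{ik}\ge0$, delays $d_{ij}\ge0$, budget $m_i>0$; $m(S)=\sum_{i\in S}m_i$. CC$(i)$: $\sum_ja_{ijk}x_{ij}\ge r_{ik}$ for all $k$, $x_{ij}\ge0$. An allocation $X\ge0$ is supply respecting if $\sum_ix_{ij}\le1$ for all $j$. For $S\subseteq A$, $X$ is jointly optimal for $S$ if it satisfies CC$(i)$ for all $i\in S$, is supply respecting, and minimizes $\sum_{i\in S}\sum_jd_{ij}x_{ij}$ among such allocations. Extensibility: for every $S\subset A$, every $X$ jointly optimal for $S$ and every $i\in A\setminus S$, there is $X'$ jointly optimal for $S\cup\{i\}$ with $\sum_jd_{i'j}x'_{i'j}=\sum_jd_{i'j}x_{i'j}$ for all $i'\in S$. $LP(\lambda)$: minimize $\sum_i\lambda_i\sum_jd_{ij}x_{ij}$ s.t. $\sum_ja_{ijk}x_{ij}\ge r_{ik}$ for all $(i,k)$, $\sum_ix_{ij}\le1$ for all $j$, $x\ge0$. $DLP(\lambda)$: maximize $\sum_{i,k}r_{ik}\alpha_{ik}-\sum_jp_j$ s.t.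 $\lambda_id_{ij}\ge\sum_ka_{ijk}\alpha_{ik}-p_j$ for all $(i,j)$, $\alpha,p\ge0$. $\mathrm{delay}_S(X)=\sum_{i\in S}\sum_jd_{ij}x_{ij}$, $\mathrm{pay}_S(X,p)=\sum_{i\in S}\sum_jp_jx_{ij}$, $\mathrm{pay}_i=\mathrm{pay}_{\{i\}}$. Given $(\lambda,p)$ and $S\subseteq A$: condition BB holds for $S$ if $\mathrm{pay}_S(X,p)=m(S)$ for every optimal solution $X$ of $LP(\lambda)$; condition SC holds for $S$ if for every $T\subseteq S$, letting $X$ be an optimal solution of $LP(\lambda)$ that maximizes $\mathrm{delay}_T$ among optimal solutions, $m(T)\ge\mathrm{pay}_T(X,p)$. The pair $(\lambda,p)$ is proper if there is $\alpha$ with $(\alpha,p)$ optimal for $DLP(\lambda)$, and BB and SC hold for every class $S_g$ of the partition of $A$ by equality of $\lambda_i$. *)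

From HB Require Import structures.
From mathcomp Require Import all_boot all_order all_algebra.
Set Implicit Arguments. Unset Strict Implicit. Unset Printing Implicit Defensive.
Import Order.TTheory GRing.Theory Num.Theory.
Local Open Scope ring_scope.

(* A market: agents A, goods G (supply 1 each), constraint indices C. *)
Record market (R : realFieldType) (A G C : finType) := Market {
  coef : A -> G -> C -> R;
  req  : A -> C -> R;
  dly  : A -> G -> R;
  bud  : A -> R
}.

Section Market.
Variables (R : realFieldType) (A G C : finType) (M : market R A G C).

Definition alloc := A -> G -> R.

Definition budS (S : {set A}) : R := \sum_(i in S) bud M i.

Definition CC (X : alloc) (i : A) : Prop :=
  (forall k : C, \sum_(j : G) coef M i j k * X i j >= req M i k) /\
  (forall j : G, 0 <= X i j).

Definition nonneg (X : alloc) : Prop := forall i j, 0 <= X i j.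

Definition supply_respecting (X : alloc) : Prop :=
  nonneg X /\ forall j : G, \sum_(i : A) X i j <= 1.

Definition delay_i (X : alloc) (i : A) : R := \sum_(j : G) dly M i j * X i j.
Definition delayS (S : {set A}) (X : alloc) : R := \sum_(i in S) delay_i X i.

Definition payS (S : {set A}) (X : alloc) (p : G -> R) : R :=
  \sum_(i in S) \sum_(j : G) p j * X i j.
Definition pay_i (i : A) (X : alloc) (p : G -> R) : R := payS [set i] X p.

Definition feasibleS (S : {set A}) (X : alloc) : Prop :=
  (forall i, i \in S -> CC X i) /\ supply_respecting X.

Definition jointly_optimal (S : {set A}) (X : alloc) : Prop :=
  feasibleS S X /\ forall Y, feasibleS S Y -> delayS S X <= delayS S Y.

Definition extensibility : Prop :=
  forall (S : {set A}) (X : alloc) (i : A),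
    S \proper [set: A] -> jointly_optimal S X -> i \notin S ->
    exists X', jointly_optimal (i |: S) X' /\
      forall i', i' \in S -> delay_i X' i' = delay_i X i'.

Definition LP_feasible (X : alloc) : Prop :=
  (forall i k, \sum_(j : G) coef M i j k * X i j >= req M i k) /\
  (forall j, \sum_(i : A) X i j <= 1) /\ nonneg X.

Definition LP_obj (lam : A -> R) (X : alloc) : R :=
  \sum_(i : A) lam i * \sum_(j : G) dly M i j * X i j.

Definition LP_optimal (lam : A -> R) (X : alloc) : Prop :=
  LP_feasible X /\ forall Y, LP_feasible Y -> LP_obj lam X <= LP_obj lam Y.

Definition DLP_feasible (lam : A -> R) (alpha : A -> C -> R) (p : G -> R) : Prop :=
  (forall i j, lam i * dly M i j >= \sum_(k : C) coef M i j k * alpha i k - p j) /\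
  (forall i k, 0 <= alpha i k) /\ (forall j, 0 <= p j).

Definition DLP_obj (alpha : A -> C -> R) (p : G -> R) : R :=
  \sum_(i : A) \sum_(k : C) req M i k * alpha i k - \sum_(j : G) p j.

Definition DLP_optimal (lam : A -> R) (alpha : A -> C -> R) (p : G -> R) : Prop :=
  DLP_feasible lam alpha p /\
  forall alpha' p', DLP_feasible lam alpha' p' -> DLP_obj alpha' p' <= DLP_obj alpha p.

Definition BB (lam : A -> R) (p : G -> R) (S : {set A}) : Prop :=
  forall X, LP_optimal lam X -> payS S X p = budS S.

Definition SC (lam : A -> R) (p : G -> R) (S : {set A}) : Prop :=
  forall T : {set A}, T \subset S ->
  forall X, LP_optimal lam X ->
    (forall Y, LP_optimal lam Y -> delayS T Y <= delayS T X) ->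
    payS T X p <= budS T.

Definition lam_class (lam : A -> R) (i : A) : {set A} := [set i' | lam i' == lam i].

Definition proper_pair (lam : A -> R) (p : G -> R) : Prop :=
  (exists alpha, DLP_optimal lam alpha p) /\
  forall i : A, BB lam p (lam_class lam i) /\ SC lam p (lam_class lam i).

End Market.

(* Extensibility lets one add the agents one at a time in decreasing order of any key
   while keeping every upper level set of the key jointly optimal; by Abel summation
   such a chain minimizes every delay objective whose nonnegative weights are monotone
   in the key.  With the key lam this gives optimal solutions of LP(lam), and LP
   duality (via Fourier-Motzkin elimination) gives, for every optimal X,
   lam_i delay_i(X) = beta_i - pay_i(X) where beta_i = sum_k alpha_ik r_ik.  Hence
   pay_i(X) >= m_i amounts to delay_i(X) <= delta_i := (beta_i - m_i) / lam_i.
   Refining the key inside each class of lam so that a set P of agents comes first,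
   SC on the rest of each class and BB on the class show that P can be served with
   total delay at most sum_(i in P) delta_i.  If no allocation met all the bounds
   delta_i, Farkas' lemma would give weights w >= 0 and a dual solution beating
   sum_i w_i delta_i, which a chain for the key w contradicts.  An allocation meeting
   the bounds is optimal, and BB turns the inequalities pay_i >= m_i into equalities. *)

From HB Require Import structures.
From mathcomp Require Import all_boot all_order all_algebra.
From mathcomp Require Import ring lra.
From Stdlib Require Import Classical_Prop.
Set Implicit Arguments. Unset Strict Implicit. Unset Printing Implicit Defensive.
Import Order.TTheory GRing.Theory Num.Theory.
Local Open Scope ring_scope.

Section FourierMotzkin.
Variables (R : realFieldType) (V : finType).

Lemma sumr_if_eq (T : finType) (t : T) (g : T -> R) :
  \sum_k (if k == t then g k else 0) = g t.
Proof. by rewrite -big_mkcond big_pred1_eq. Qed.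

Lemma sumr_if_eqM (T : finType) (t : T) (c : R) (f : T -> R) :
  \sum_k (if k == t then c else 0) * f k = c * f t.
Proof.
rewrite -(sumr_if_eq t (fun k => c * f k)).
by apply: eq_bigr => k _; case: eqP; rewrite ?mul0r.
Qed.

Lemma exists_between (T : finType) (P Q : pred T) (L U : T -> R) :
  (forall p q, P p -> Q q -> L p <= U q) ->
  exists t, (forall p, P p -> L p <= t) /\ (forall q, Q q -> t <= U q).
Proof.
move=> LU; case: (pickP P) => [p0 Pp0 | noP].
  have [pm Ppm maxL] := arg_maxP L Pp0.
  by exists (L pm); split => [p Pp | q Qq]; [exact: maxL | exact: LU].
case: (pickP Q) => [q0 Qq0 | noQ].
  have [qm Qqm minU] := arg_minP U Qq0.
  by exists (U qm); split => [p | q Qq]; [rewrite noP | exact: minU].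
by exists 0; split => [p | q]; [rewrite noP | rewrite noQ].
Qed.

Definition infeasible (K : finType) (a : K -> V -> R) (b : K -> R) :=
  forall x : V -> R, exists k, \sum_v a k v * x v < b k.

Definition farkas_certificate (K : finType) (a : K -> V -> R) (b : K -> R)
    (y : K -> R) :=
  [/\ forall k, 0 <= y k, forall v, \sum_k y k * a k v = 0 & 0 < \sum_k y k * b k].

Lemma farkas_certificate_zero (K : finType) (a : K -> V -> R) b :
  (forall k v, a k v = 0) -> infeasible a b -> exists y, farkas_certificate a b y.
Proof.
move=> a0 /(_ (fun _ => 0)) [k hk].
exists (fun k' => if k' == k then 1 else 0); split.
- by move=> k'; case: eqP.
- by move=> v; apply: big1 => k' _; rewrite a0 mulr0.
- rewrite sumr_if_eqM mul1r; apply: le_lt_trans hk.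
  by rewrite big1 // => v _; rewrite mulr0.
Qed.

Section Elimination.
Variables (K : finType) (a : K -> V -> R) (b : K -> R) (v0 : V).

(* Fourier-Motzkin elimination of [v0]: keep the rows where [v0] does not occur
   and combine each row with positive coefficient with each row with negative one. *)
Definition fm_mult (k' : K + K * K) (k0 : K) : R :=
  match k' with
  | inl k => if a k v0 == 0 then (if k0 == k then 1 else 0) else 0
  | inr (p, q) => if (0 < a p v0) && (a q v0 < 0) then
      (if k0 == p then - a q v0 else 0) + (if k0 == q then a p v0 else 0) else 0
  end.
Definition fm_coef k' v := \sum_k0 fm_mult k' k0 * a k0 v.
Definition fm_rhs k' := \sum_k0 fm_mult k' k0 * b k0.

Lemma fm_mult_ge0 k' k0 : 0 <= fm_mult k' k0.
Proof.
case: k' => [k|[p q]] /=; first by case: ifP => // _; case: ifP.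
case: ifP => // /andP[ap aq]; apply: addr_ge0; case: ifP => //.
  by rewrite oppr_ge0 ltW.
by rewrite ltW.
Qed.

Lemma sum_fm_mult_inl k (f : K -> R) :
  \sum_k0 fm_mult (inl k) k0 * f k0 = if a k v0 == 0 then f k else 0.
Proof.
rewrite /=; case: ifP => _; first by rewrite sumr_if_eqM mul1r.
by rewrite big1 // => k0 _; rewrite mul0r.
Qed.

Lemma sum_fm_mult_inr p q (f : K -> R) :
  \sum_k0 fm_mult (inr (p, q)) k0 * f k0 =
  if (0 < a p v0) && (a q v0 < 0) then - a q v0 * f p + a p v0 * f q else 0.
Proof.
rewrite /=; case: ifP => _; last by rewrite big1 // => k0 _; rewrite mul0r.
rewrite -(sumr_if_eqM p (- a q v0) f) -(sumr_if_eqM q (a p v0) f) -big_split /=.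
by apply: eq_bigr => k0 _; rewrite mulrDl.
Qed.

Lemma fm_coef_eliminated k' : fm_coef k' v0 = 0.
Proof.
rewrite /fm_coef; case: k' => [k|[p q]]; rewrite ?sum_fm_mult_inl ?sum_fm_mult_inr.
  by case: eqP.
by case: ifP => // _; ring.
Qed.

Lemma fm_coef_support k' v : fm_coef k' v != 0 -> exists k, a k v != 0.
Proof.
move=> nz; case: (pickP (fun k => a k v != 0)) => [k hk|none]; first by exists k.
move: nz; rewrite /fm_coef big1 ?eqxx // => k0 _.
by move: (none k0) => /negbFE/eqP ->; rewrite mulr0.
Qed.

Lemma farkas_certificate_lift y' : farkas_certificate fm_coef fm_rhs y' ->
  farkas_certificate a b (fun k0 => \sum_k' y' k' * fm_mult k' k0).
Proof.
have comb f : \sum_k0 (\sum_k' y' k' * fm_mult k' k0) * f k0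
     = \sum_k' y' k' * \sum_k0 fm_mult k' k0 * f k0.
  under eq_bigr do rewrite mulr_suml.
  rewrite exchange_big /=; apply: eq_bigr => k' _; rewrite mulr_sumr.
  by apply: eq_bigr => k0 _; rewrite mulrA.
move=> [y'0 y'a y'b]; split.
- by move=> k0; apply: sumr_ge0 => k' _; rewrite mulr_ge0 ?fm_mult_ge0.
- by move=> v; rewrite comb; exact: y'a.
- by rewrite comb.
Qed.

Lemma fm_solution_lift (x' : V -> R) :
  (forall k', fm_rhs k' <= \sum_v fm_coef k' v * x' v) ->
  exists x : V -> R, forall k, b k <= \sum_v a k v * x v.
Proof.
move=> sol'.
pose x0 v := if v == v0 then 0 else x' v.
pose c k := \sum_v a k v * x0 v.
have fm_c k' : \sum_v fm_coef k' v * x' v = \sum_k0 fm_mult k' k0 * c k0.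
  transitivity (\sum_v fm_coef k' v * x0 v).
    apply: eq_bigr => v _; rewrite /x0; case: eqP => [->|//].
    by rewrite fm_coef_eliminated !mul0r.
  rewrite /fm_coef; under eq_bigr do rewrite mulr_suml.
  rewrite exchange_big /=; apply: eq_bigr => k0 _; rewrite /c mulr_sumr.
  by apply: eq_bigr => v _; rewrite mulrA.
have set_v0 t k : \sum_v a k v * (if v == v0 then t else x0 v) = a k v0 * t + c k.
  rewrite /c (bigD1 v0) //= eqxx [in RHS](bigD1 v0) //= /x0 eqxx mulr0 add0r.
  by congr (_ + _); apply: eq_bigr => v /negbTE ->.
(* Each row bounds [x v0] from below or above; the combined rows say that these
   bounds are compatible. *)
have bounds p q : 0 < a p v0 -> a q v0 < 0 ->
    (b p - c p) / a p v0 <= (b q - c q) / a q v0.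
  move=> ap aq; have := sol' (inr (p, q)).
  rewrite fm_c /fm_rhs !sum_fm_mult_inr ap aq /= => pq.
  set s := (b q - c q) / a q v0.
  have hs : s * a q v0 = b q - c q by rewrite /s divfK // ltr0_neq0.
  rewrite ler_pdivrMr //; nra.
have [t [lo hi]] := exists_between bounds.
exists (fun v => if v == v0 then t else x0 v) => k; rewrite set_v0.
case: (ltrgtP (a k v0) 0) => ak.
- have := hi k ak; set s := (b k - c k) / a k v0 => st.
  have hs : s * a k v0 = b k - c k by rewrite /s divfK // ltr0_neq0.
  nra.
- have := lo k ak; set s := (b k - c k) / a k v0 => st.
  have hs : s * a k v0 = b k - c k by rewrite /s divfK // gt_eqF.
  nra.
- have := sol' (inl k); rewrite fm_c /fm_rhs !sum_fm_mult_inl ak eqxx.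
  by rewrite mul0r add0r.
Qed.

End Elimination.

Lemma farkas (K : finType) (a : K -> V -> R) b :
  infeasible a b -> exists y, farkas_certificate a b y.
Proof.
pose used (K : finType) (a : K -> V -> R) := [set v | [exists k, a k v != 0]].
have unused (K' : finType) (a' : K' -> V -> R) v :
    v \notin used K' a' -> forall k, a' k v = 0.
  by move=> nv k; apply/eqP; apply: contraNT nv => nz; rewrite inE; apply/existsP; exists k.
have [n ltn] := ubnP #|used K a|; elim: n => // n IH in K a b ltn *.
move=> inf; case: (set_0Vmem (used K a)) => [none|[v0 usedv0]].
  by apply: farkas_certificate_zero inf => k v; apply: unused; rewrite none inE.
have [y' cert'] : exists y', farkas_certificate (fm_coef a v0) (fm_rhs a b v0) y'.
  apply: IH.
    apply: leq_trans (_ : #|used K a :\ v0| < n)%N; last first.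
      by move: ltn; rewrite (cardsD1 v0) usedv0.
    rewrite ltnS subset_leq_card //; apply/subsetP => v; rewrite !inE => /existsP[k' nz].
    have [k ak] := fm_coef_support nz.
    apply/andP; split; last by apply/existsP; exists k.
    by apply: contraNneq nz => ->; rewrite fm_coef_eliminated.
  move=> x'; case: (boolP [forall k', fm_rhs a b v0 k' <= \sum_v fm_coef a v0 k' v * x' v]).
    move=> /forallP sol'; have [x solx] := fm_solution_lift sol'.
    by have [k hk] := inf x; move: (solx k); rewrite leNgt hk.
  by rewrite negb_forall => /existsP[k' hk']; exists k'; rewrite ltNge.
by eexists; apply: farkas_certificate_lift cert'.
Qed.

End FourierMotzkin.

Section AbelSummation.
Variables (R : realFieldType) (A : finType).
Implicit Types (B : {set A}) (w a : A -> R).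

Lemma sumr_setT (F : A -> R) : \sum_(i in [set: A]) F i = \sum_i F i.
Proof. by apply: eq_bigl => i; rewrite inE. Qed.

Lemma sum_split_at_min B w a j0 : j0 \in B ->
  exists jm, [/\ jm \in B, forall i, i \in B -> w jm <= w i,
    (#|[set i in B | (w jm < w i)%R]| < #|B|)%N &
    \sum_(i in B) w i * a i = w jm * \sum_(i in B) a i +
       \sum_(i in [set i in B | w jm < w i]) (w i - w jm) * a i].
Proof.
move=> Bj0; have [jm Bjm minw] := arg_minP w Bj0.
exists jm; split => //.
- apply: proper_card; rewrite properE; apply/andP; split.
    by apply/subsetP => i; rewrite inE => /andP[].
  by apply/subsetPn; exists jm; rewrite // inE ltxx andbF.
- rewrite (eq_bigr (fun i => w jm * a i + (w i - w jm) * a i)) => [|i _]; last by ring.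
  rewrite big_split /= -mulr_sumr; congr (_ + _).
  rewrite (big_setID [set i in B | w jm < w i]) /=.
  rewrite (_ : B :&: _ = [set i in B | w jm < w i]); last first.
    by apply/setP => i; rewrite !inE andbA andbb.
  rewrite [X in _ + X]big1 ?addr0 // => i; rewrite !inE => /andP[Ui Bi].
  rewrite Bi /= in Ui; have -> : w i = w jm by apply/eqP; rewrite eq_le minw // andbT leNgt.
  by rewrite subrr mul0r.
Qed.

Lemma level_sum_shift B w a m j : j \in B -> m < w j ->
  \sum_(i in [set i in B | m < w i] | w j - m <= w i - m) a i =
  \sum_(i in B | w j <= w i) a i.
Proof.
move=> Bj mj; apply: eq_bigl => i; rewrite inE lerD2r.
case: (i \in B) => //=; case: (lerP (w j) (w i)) => ji; rewrite ?andbF ?andbT //.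
exact: lt_le_trans ji.
Qed.

(* Abel summation: the weighted sum is a nonnegative combination of the level sums. *)
Lemma sum_weighted_ge0 B w a :
  (forall i, i \in B -> 0 <= w i) ->
  (forall j, j \in B -> 0 <= \sum_(i in B | w j <= w i) a i) ->
  0 <= \sum_(i in B) w i * a i.
Proof.
have [n ltn] := ubnP #|B|; elim: n => // n IH in B w a ltn *.
move=> w0 levels; case: (set_0Vmem B) => [->|[j0 Bj0]]; first by rewrite big_set0.
have [jm [Bjm minw ltU ->]] := sum_split_at_min w a Bj0.
apply: addr_ge0.
  rewrite mulr_ge0 ?w0 //; have := levels jm Bjm; congr (0 <= _).
  by apply: eq_bigl => i; case Bi: (i \in B); rewrite //= minw.
apply: (IH _ (fun i => w i - w jm)); first exact: leq_trans ltU _.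
- by move=> i; rewrite inE => /andP[_ ltji]; rewrite subr_ge0 ltW.
- by move=> j; rewrite inE => /andP[Bj ltj]; rewrite level_sum_shift //; exact: levels.
Qed.

Lemma level_sums_eq0 B w a :
  (forall i, i \in B -> 0 < w i) ->
  (forall j, j \in B -> 0 <= \sum_(i in B | w j <= w i) a i) ->
  \sum_(i in B) w i * a i = 0 ->
  forall j, j \in B -> \sum_(i in B | w j <= w i) a i = 0.
Proof.
have [n ltn] := ubnP #|B|; elim: n => // n IH in B w a ltn *.
move=> w0 levels sum0 j Bj.
have [jm [Bjm minw ltU split]] := sum_split_at_min w a Bj.
have levelsU j' : j' \in [set i in B | w jm < w i] ->
    0 <= \sum_(i in [set i in B | w jm < w i] | w j' - w jm <= w i - w jm) a i.
  by rewrite inE => /andP[Bj' ltj']; rewrite level_sum_shift //; exact: levels.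
have sumB : \sum_(i in B) a i = \sum_(i in B | w jm <= w i) a i.
  by apply: eq_bigl => i; case Bi: (i \in B); rewrite //= minw.
have ge1 : 0 <= w jm * \sum_(i in B) a i
  by apply: mulr_ge0; [exact/ltW/w0 | rewrite sumB; exact: levels].
have ge2 : 0 <= \sum_(i in [set i in B | w jm < w i]) (w i - w jm) * a i.
  apply: sum_weighted_ge0 levelsU => i.
  by rewrite inE => /andP[_ ltji]; rewrite subr_ge0 ltW.
have [eq1 eq2] : w jm * \sum_(i in B) a i = 0 /\
    \sum_(i in [set i in B | w jm < w i]) (w i - w jm) * a i = 0.
  by rewrite sum0 in split; split; lra.
case: (ltrP (w jm) (w j)) => jmj.
  rewrite -(level_sum_shift a Bj jmj).
  apply: (IH _ (fun i => w i - w jm)) => //; first exact: leq_trans ltU _.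
    by move=> i; rewrite inE => /andP[_ ltji]; rewrite subr_gt0.
  by rewrite inE Bj.
rewrite (eq_bigl (mem B)) => [|i]; last first.
  by case Bi: (i \in B); rewrite //= (le_trans jmj) ?minw.
by move: eq1 => /eqP; rewrite mulf_eq0 gt_eqF ?w0 //= => /eqP.
Qed.

Lemma ler_sum_weighted w (f g : A -> R) : (forall i, 0 <= w i) ->
  (forall j, \sum_(i | w j <= w i) f i <= \sum_(i | w j <= w i) g i) ->
  \sum_i w i * f i <= \sum_i w i * g i.
Proof.
move=> w0 levels; rewrite -subr_ge0 -sumrB.
rewrite (eq_bigr (fun i => w i * (g i - f i))) => [|i _]; last by rewrite mulrBr.
rewrite -sumr_setT; apply: sum_weighted_ge0 => [i _|j _]; first exact: w0.
by rewrite (eq_bigl (fun i => w j <= w i)) => [|i]; rewrite ?sumrB ?subr_ge0 ?inE.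
Qed.

End AbelSummation.

Section LamClasses.
Variables (R : realFieldType) (A : finType) (lam : A -> R).

Lemma sum_ge0_by_lam_class (P : {set A}) (f : A -> R) :
  (forall i0, 0 <= \sum_(i in P :&: lam_class lam i0) f i) -> 0 <= \sum_(i in P) f i.
Proof.
move=> classes; rewrite (partition_big (lam_class lam) predT) //=.
apply: sumr_ge0 => Cl _; case: (pickP (fun i => lam_class lam i == Cl)) => [i0 /eqP <-|none].
  have := classes i0; congr (0 <= _); apply: eq_bigl => i; rewrite !inE.
  case: (i \in P) => //=; apply/eqP/eqP => [eqi|eqC].
    by apply/setP => x; rewrite !inE eqi.
  have : i \in lam_class lam i by rewrite inE.
  by rewrite eqC inE => /eqP.
by rewrite big1 // => i /andP[_]; rewrite none.
Qed.

Lemma eq_sum_by_lam_class (P : {set A}) (f g : A -> R) :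
  (forall i0, \sum_(i in P :&: lam_class lam i0) f i =
              \sum_(i in P :&: lam_class lam i0) g i) ->
  \sum_(i in P) f i = \sum_(i in P) g i.
Proof.
move=> classes; apply/eqP; rewrite eq_le; apply/andP; split;
  rewrite -subr_ge0 -sumrB; apply: sum_ge0_by_lam_class => i0;
  rewrite sumrB; have := classes i0; lra.
Qed.

End LamClasses.

Section Chains.
Variables (R : realFieldType) (A G C : finType) (M : market R A G C).
Implicit Types (S T : {set A}) (X Y : alloc R A G) (lam w : A -> R).

Lemma jointly_optimal_same_delays S T X Y :
  jointly_optimal M S X -> jointly_optimal M T Y -> S \subset T ->
  (forall i, i \in S -> delay_i M Y i = delay_i M X i) -> jointly_optimal M S Y.
Proof.
move=> [_ optX] [[ccY supY] _] ST eqd; split.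
  by split => // i Si; apply: ccY; exact: (subsetP ST).
move=> Z feasZ; rewrite /delayS (eq_bigr (delay_i M X)) => [|i Si]; last exact: eqd.
exact: optX.
Qed.

Lemma jointly_optimal_set0 : jointly_optimal M set0 (fun _ _ => 0).
Proof.
split; first split.
- by move=> i; rewrite inE.
- by split => // j; rewrite big1 ?ler01.
- by move=> Y _; rewrite /delayS !big_set0.
Qed.

Lemma extensible_chain (hext : extensibility M) d (K : orderType d) (kap : A -> K) :
  exists X, jointly_optimal M setT X /\
    forall c : K, jointly_optimal M [set i | (c <= kap i)%O] X.
Proof.
suff [X [optT levels]] : exists X, jointly_optimal M setT X /\
    forall c : K, [set i | (c <= kap i)%O] \subset setT ->
      jointly_optimal M [set i | (c <= kap i)%O] X.
  by exists X; split => // c; apply: levels; apply: subsetT.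
move: [set: A] => T; have [n ltn] := ubnP #|T|; elim: n => // n IH in T ltn *.
case: (set_0Vmem T) => [->|[i0 Ti0]].
  exists (fun _ _ => 0); split => [|c]; first exact: jointly_optimal_set0.
  by rewrite subset0 => /eqP ->; exact: jointly_optimal_set0.
have [i Ti' mink] := arg_minP kap Ti0; have Ti : i \in T := Ti'.
have [X [optX levelsX]] : exists X, jointly_optimal M (T :\ i) X /\ forall c : K,
    [set i | (c <= kap i)%O] \subset T :\ i -> jointly_optimal M [set i | (c <= kap i)%O] X.
  by apply: IH; move: ltn; rewrite (cardsD1 i) Ti.
have Tiproper : T :\ i \proper [set: A].
  by rewrite properT; apply: contraTneq (in_setT i) => <-; rewrite !inE eqxx.
have iTi : i \notin T :\ i by rewrite !inE eqxx.
have [Y [optY eqd]] := hext _ _ _ Tiproper optX iTi.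
rewrite setD1K // in optY; exists Y; split => // c levelT.
case: (boolP (c <= kap i)%O) => cki.
  suff -> : [set i | (c <= kap i)%O] = T by [].
  apply/eqP; rewrite eqEsubset levelT /=; apply/subsetP => j Tj.
  by rewrite inE (le_trans cki) ?mink.
have levelTi : [set i | (c <= kap i)%O] \subset T :\ i.
  apply/subsetP => j lj; rewrite !inE (subsetP levelT _ lj) andbT.
  by apply: contraNneq cki => <-; move: lj; rewrite inE.
apply: (jointly_optimal_same_delays (levelsX c levelTi) optY levelT) => j lj.
exact/eqd/(subsetP levelTi).
Qed.

Lemma feasibleS_LP_feasible S X : LP_feasible M X -> feasibleS M S X.
Proof. by move=> [cc [sup nn]]; split => // i _; split => // j; apply: nn. Qed.

Lemma LP_feasible_jointly_optimal X : jointly_optimal M setT X -> LP_feasible M X.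
Proof.
move=> [[cc [nn sup]] _]; split; last by split.
by move=> i k; have [] := cc i (in_setT i).
Qed.

Lemma delayS_level w X j :
  delayS M [set i | w j <= w i] X = \sum_(i | w j <= w i) delay_i M X i.
Proof. by apply: eq_bigl => i; rewrite inE. Qed.

Lemma delayS_setD S T X : T \subset S -> delayS M (S :\: T) X = delayS M S X - delayS M T X.
Proof. by move=> TS; rewrite [delayS M S X](big_setID T) (setIidPr TS) addrC addKr. Qed.

Lemma LP_objE lam X : LP_obj M lam X = \sum_i lam i * delay_i M X i.
Proof. by []. Qed.

Lemma LP_optimal_chain lam X : (forall i, 0 <= lam i) -> LP_feasible M X ->
  (forall j, jointly_optimal M [set i | lam j <= lam i] X) -> LP_optimal M lam X.
Proof.
move=> lam0 feasX levels; split => // Y feasY; rewrite !LP_objE.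
apply: ler_sum_weighted => // j; rewrite -!delayS_level.
by apply: (levels j).2; apply: feasibleS_LP_feasible.
Qed.

Lemma LP_optimal_delayS_level lam X Y : (forall i, 0 < lam i) ->
  LP_optimal M lam X -> LP_optimal M lam Y ->
  (forall j, jointly_optimal M [set i | lam j <= lam i] X) ->
  forall j, delayS M [set i | lam j <= lam i] Y = delayS M [set i | lam j <= lam i] X.
Proof.
move=> lam0 [feasX optX] [feasY optY] levels j; apply/eqP; rewrite -subr_eq0.
have eqT (f : A -> R) P : \sum_(i in [set: A] | P i) f i = \sum_(i | P i) f i.
  by apply: eq_bigl => i; rewrite inE.
rewrite !delayS_level -sumrB -eqT; apply/eqP.
apply: (level_sums_eq0 (w := lam)) => //.
- move=> j' _; rewrite eqT sumrB subr_ge0 -!delayS_level.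
  by apply: (levels j').2; apply: feasibleS_LP_feasible.
- transitivity (LP_obj M lam Y - LP_obj M lam X).
    by rewrite !LP_objE -sumrB; apply: eq_big => [i|i _]; rewrite ?inE ?mulrBr.
  by apply/eqP; rewrite subr_eq0 eq_le optX ?optY.
Qed.

End Chains.

Section Duality.
Variables (R : realFieldType) (A G C : finType) (M : market R A G C).
Implicit Types (X : alloc R A G) (lam : A -> R) (al : A -> C -> R) (p : G -> R).

Lemma pay_iE i X p : pay_i i X p = \sum_j p j * X i j.
Proof. by rewrite /pay_i /payS big_set1. Qed.

Lemma payS_sum S X p : payS S X p = \sum_(i in S) pay_i i X p.
Proof. by apply: eq_bigr => i _; rewrite pay_iE. Qed.

Lemma LP_DLP_gap lam X al p :
  LP_obj M lam X - DLP_obj M al p =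
  \sum_i \sum_j X i j * (lam i * dly M i j - \sum_k coef M i j k * al i k + p j)
  + \sum_i \sum_k al i k * (\sum_j coef M i j k * X i j - req M i k)
  + \sum_j p j * (1 - \sum_i X i j).
Proof.
have e1 : \sum_i \sum_j X i j * (lam i * dly M i j - \sum_k coef M i j k * al i k + p j)
  = \sum_i \sum_j X i j * (lam i * dly M i j)
    - \sum_i \sum_j \sum_k coef M i j k * al i k * X i j + \sum_i \sum_j p j * X i j.
  rewrite -sumrB -big_split /=; apply: eq_bigr => i _.
  rewrite -sumrB -big_split /=; apply: eq_bigr => j _.
  rewrite -mulr_suml; ring.
have e2 : \sum_i \sum_k al i k * (\sum_j coef M i j k * X i j - req M i k)
  = \sum_i \sum_j \sum_k coef M i j k * al i k * X i j
    - \sum_i \sum_k req M i k * al i k.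
  rewrite -sumrB; apply: eq_bigr => i _.
  rewrite exchange_big /= -sumrB; apply: eq_bigr => k _.
  rewrite mulrBr mulr_sumr mulrC; congr (_ - _).
  by apply: eq_bigr => j _; ring.
have e3 : \sum_j p j * (1 - \sum_i X i j) = \sum_j p j - \sum_i \sum_j p j * X i j.
  rewrite exchange_big /= -sumrB; apply: eq_bigr => j _.
  by rewrite mulrBr mulr1 mulr_sumr.
have e4 : LP_obj M lam X = \sum_i \sum_j X i j * (lam i * dly M i j).
  rewrite /LP_obj; apply: eq_bigr => i _; rewrite mulr_sumr.
  by apply: eq_bigr => j _; ring.
rewrite e1 e2 e3 e4 /DLP_obj; ring.
Qed.

Lemma LP_DLP_gap_terms_ge0 lam X al p :
  LP_feasible M X -> DLP_feasible M lam al p ->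
  [/\ forall i j, 0 <= X i j * (lam i * dly M i j - \sum_k coef M i j k * al i k + p j),
      forall i k, 0 <= al i k * (\sum_j coef M i j k * X i j - req M i k) &
      forall j, 0 <= p j * (1 - \sum_i X i j)].
Proof.
move=> [cc [sup nn]] [dual [al0 p0]]; split=> [i j|i k|j]; apply: mulr_ge0 => //.
- by have := dual i j; lra.
- by rewrite subr_ge0.
- by rewrite subr_ge0.
Qed.

Lemma weak_duality lam X al p :
  LP_feasible M X -> DLP_feasible M lam al p -> DLP_obj M al p <= LP_obj M lam X.
Proof.
move=> feasX feasD; have [t1 t2 t3] := LP_DLP_gap_terms_ge0 feasX feasD.
rewrite -subr_ge0 LP_DLP_gap; do 2?apply: addr_ge0; do ?apply: sumr_ge0 => ? _ //.
Qed.

Lemma complementary_slackness lam X al p :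
  LP_feasible M X -> DLP_feasible M lam al p -> LP_obj M lam X = DLP_obj M al p ->
  forall i, lam i * delay_i M X i = \sum_k al i k * req M i k - pay_i i X p.
Proof.
move=> feasX feasD eq_obj i; have [t1 t2 t3] := LP_DLP_gap_terms_ge0 feasX feasD.
have sum_ge0 (I J : finType) (F : I -> J -> R) : (forall i j, 0 <= F i j) ->
    0 <= \sum_i \sum_j F i j by move=> F0; do 2!apply: sumr_ge0 => ? _.
have sum_eq0 (I J : finType) (F : I -> J -> R) : (forall i j, 0 <= F i j) ->
    \sum_i \sum_j F i j = 0 -> forall i j, F i j = 0.
  move=> F0 F00 i' j'; have row0 : \sum_j F i' j = 0.
    by apply: (psumr_eq0P _ F00) => // ? _; apply: sumr_ge0 => ? _.
  by apply: (psumr_eq0P _ row0).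
have := LP_DLP_gap lam X al p; rewrite eq_obj subrr => gap0.
have s1 := sum_ge0 _ _ _ t1; have s2 := sum_ge0 _ _ _ t2.
have s3 : 0 <= \sum_j p j * (1 - \sum_i X i j) by apply: sumr_ge0 => ? _.
have z1 := sum_eq0 _ _ _ t1 ltac:(lra); have z2 := sum_eq0 _ _ _ t2 ltac:(lra).
rewrite pay_iE; transitivity (\sum_j (\sum_k coef M i j k * al i k * X i j - p j * X i j)).
  rewrite /delay_i mulr_sumr; apply: eq_bigr => j _.
  by have := z1 i j; rewrite -mulr_suml; lra.
rewrite sumrB; congr (_ - _); rewrite exchange_big /=; apply: eq_bigr => k _.
transitivity (al i k * \sum_j coef M i j k * X i j).
  by rewrite mulr_sumr; apply: eq_bigr => j _; ring.
by have := z2 i k; rewrite mulrBr; lra.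
Qed.

Lemma eq_DLP_feasible lam1 lam2 al p : lam1 =1 lam2 ->
  DLP_feasible M lam1 al p -> DLP_feasible M lam2 al p.
Proof. by move=> eql [dual nn]; split => // i j; rewrite -eql. Qed.

Lemma DLP_feasible_scale lam s al p : 0 < s ->
  DLP_feasible M (fun i => s * lam i) al p ->
  DLP_feasible M lam (fun i k => al i k / s) (fun j => p j / s) /\
  DLP_obj M (fun i k => al i k / s) (fun j => p j / s) = DLP_obj M al p / s.
Proof.
move=> s0 [dual [al0 p0]]; split; [split; [|split]|].
- move=> i j; have := dual i j.
  have -> : \sum_k coef M i j k * (al i k / s) - p j / s =
            (\sum_k coef M i j k * al i k - p j) / s.
    by rewrite mulrBl mulr_suml; congr (_ - _); apply: eq_bigr => k _; rewrite mulrA.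
  by move=> ?; rewrite ler_pdivrMr //; nra.
- by move=> i k; apply: divr_ge0 => //; exact: ltW.
- by move=> j; apply: divr_ge0 => //; exact: ltW.
rewrite /DLP_obj mulrBl !mulr_suml; congr (_ - _).
by apply: eq_bigr => i _; rewrite mulr_suml; apply: eq_bigr => k _; rewrite mulrA.
Qed.

End Duality.

Section LPFarkas.
Variables (R : realFieldType) (A G C : finType) (M : market R A G C).
Variables (E : finType) (c : E -> A -> R) (th : E -> R).

Lemma sumr_pair (I J : finType) (F : I * J -> R) : \sum_v F v = \sum_i \sum_j F (i, j).
Proof. by rewrite pair_big /=; apply: eq_bigr => -[]. Qed.

(* The constraints of LP together with the requirements
   [\sum_i c e i * delay_i X i <= th e], as a system over the unknowns [x (i, j) = X i j]. *)
Definition lp_coef (k : (A * G + A * C) + (G + E)) (v : A * G) : R :=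
  match k with
  | inl (inl ij) => if v == ij then 1 else 0
  | inl (inr ik) => if v.1 == ik.1 then coef M v.1 v.2 ik.2 else 0
  | inr (inl j) => if v.2 == j then -1 else 0
  | inr (inr e) => - (c e v.1 * dly M v.1 v.2)
  end.

Definition lp_rhs (k : (A * G + A * C) + (G + E)) : R :=
  match k with
  | inl (inl _) => 0
  | inl (inr ik) => req M ik.1 ik.2
  | inr (inl _) => -1
  | inr (inr e) => - th e
  end.

Lemma lp_row_nonneg (x : A * G -> R) ij : \sum_v lp_coef (inl (inl ij)) v * x v = x ij.
Proof.
by rewrite -(sumr_if_eq ij x); apply: eq_bigr => v _ /=; case: eqP; rewrite ?mul1r ?mul0r.
Qed.

Lemma lp_row_req (x : A * G -> R) i k :
  \sum_v lp_coef (inl (inr (i, k))) v * x v = \sum_j coef M i j k * x (i, j).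
Proof.
rewrite sumr_pair -(sumr_if_eq i (fun i' => \sum_j coef M i' j k * x (i', j))).
by apply: eq_bigr => i' _ /=; case: eqP => // _; rewrite big1 // => j _; rewrite mul0r.
Qed.

Lemma lp_row_supply (x : A * G -> R) j :
  \sum_v lp_coef (inr (inl j)) v * x v = - \sum_i x (i, j).
Proof.
rewrite sumr_pair -sumrN; apply: eq_bigr => i _.
rewrite -(sumr_if_eq j (fun j' => - x (i, j'))); apply: eq_bigr => j' _ /=.
by case: eqP; rewrite ?mulN1r ?mul0r.
Qed.

Lemma lp_row_delay (x : A * G -> R) e :
  \sum_v lp_coef (inr (inr e)) v * x v = - \sum_i c e i * \sum_j dly M i j * x (i, j).
Proof.
rewrite sumr_pair -sumrN; apply: eq_bigr => i _.
by rewrite mulr_sumr -sumrN; apply: eq_bigr => j _ /=; ring.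
Qed.

Lemma lp_system_infeasible :
  (forall X, LP_feasible M X -> exists e, th e < \sum_i c e i * delay_i M X i) ->
  infeasible lp_coef lp_rhs.
Proof.
move=> viol x; pose X : alloc R A G := fun i j => x (i, j).
case: (boolP [forall k, lp_rhs k <= \sum_v lp_coef k v * x v]); last first.
  by rewrite negb_forall => /existsP[k hk]; exists k; rewrite ltNge.
move=> /forallP sol; have feasX : LP_feasible M X.
  split; [|split].
  - by move=> i k; have := sol (inl (inr (i, k))); rewrite lp_row_req.
  - by move=> j; have := sol (inr (inl j)); rewrite lp_row_supply /= lerN2.
  - by move=> i j; have := sol (inl (inl (i, j))); rewrite lp_row_nonneg.
have [e lt_e] := viol X feasX.
by have := sol (inr (inr e)); rewrite lp_row_delay /= lerN2 leNgt lt_e.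
Qed.

(* The columns of a certificate are the dual constraints, with the rows of
   [x >= 0] as slack; its [E]-part gives the weights. *)
Lemma farkas_certificate_DLP y : farkas_certificate lp_coef lp_rhs y ->
  let w e := y (inr (inr e)) in
  DLP_feasible M (fun i => \sum_e w e * c e i)
    (fun i k => y (inl (inr (i, k)))) (fun j => y (inr (inl j))) /\
  \sum_e w e * th e < DLP_obj M (fun i k => y (inl (inr (i, k)))) (fun j => y (inr (inl j))).
Proof.
move=> [y0 cols pos] w.
have col i j : y (inl (inl (i, j))) + \sum_k coef M i j k * y (inl (inr (i, k)))
     - y (inr (inl j)) - (\sum_e w e * c e i) * dly M i j = 0.
  have s1 : \sum_ij y (inl (inl ij)) * (if (i, j) == ij then 1 else 0) = y (inl (inl (i, j))).
    rewrite -(sumr_if_eq (i, j) (fun ij => y (inl (inl ij)))).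
    by apply: eq_bigr => ij _; rewrite eq_sym; case: eqP; rewrite ?mulr1 ?mulr0.
  have s2 : \sum_ik y (inl (inr ik)) * (if i == ik.1 then coef M i j ik.2 else 0)
      = \sum_k coef M i j k * y (inl (inr (i, k))).
    rewrite sumr_pair -(sumr_if_eq i (fun i' => \sum_k coef M i j k * y (inl (inr (i', k))))).
    apply: eq_bigr => i' _ /=; rewrite eq_sym; case: eqP => [->|_].
      by apply: eq_bigr => k _; rewrite mulrC.
    by rewrite big1 // => k _; rewrite mulr0.
  have s3 : \sum_j' y (inr (inl j')) * (if j == j' then -1 else 0) = - y (inr (inl j)).
    rewrite -(sumr_if_eq j (fun j' => y (inr (inl j')))) -sumrN.
    by apply: eq_bigr => j' _; rewrite eq_sym; case: eqP; rewrite ?mulrN1 ?mulr0 ?oppr0.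
  have s4 : \sum_e y (inr (inr e)) * - (c e i * dly M i j)
      = - ((\sum_e w e * c e i) * dly M i j).
    by rewrite mulr_suml -sumrN; apply: eq_bigr => e _; rewrite /w; ring.
  by have := cols (i, j); rewrite !big_sumType /= s1 s2 s3 s4; lra.
split; first split; [|split|].
- by move=> i j; have := col i j; have := y0 (inl (inl (i, j))); lra.
- by move=> i k; apply: y0.
- by move=> j; apply: y0.
move: pos; rewrite !big_sumType /= big1 ?add0r => [|ij _]; last by rewrite mulr0.
rewrite sumr_pair /DLP_obj.
have -> : \sum_i \sum_k y (inl (inr (i, k))) * req M (i, k).1 (i, k).2 =
          \sum_i \sum_k req M i k * y (inl (inr (i, k))).
  by apply: eq_bigr => i _; apply: eq_bigr => k _; rewrite mulrC.
have -> : \sum_j y (inr (inl j)) * -1 = - \sum_j y (inr (inl j)).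
  by rewrite -sumrN; apply: eq_bigr => j _; rewrite mulrN1.
have -> : \sum_e y (inr (inr e)) * - th e = - \sum_e w e * th e.
  by rewrite -sumrN; apply: eq_bigr => e _; rewrite mulrN.
lra.
Qed.

Lemma LP_farkas :
  (forall X, LP_feasible M X -> exists e, th e < \sum_i c e i * delay_i M X i) ->
  exists w : E -> R, (forall e, 0 <= w e) /\ exists al pp,
    DLP_feasible M (fun i => \sum_e w e * c e i) al pp /\
    \sum_e w e * th e < DLP_obj M al pp.
Proof.
move=> /lp_system_infeasible/farkas[y cert].
have [y0 _ _] := cert; have [dual gap] := farkas_certificate_DLP cert.
exists (fun e => y (inr (inr e))); split=> [e|]; first exact: y0.
by do 2!eexists; exact: (conj dual gap).
Qed.

End LPFarkas.

Lemma strong_duality (R : realFieldType) (A G C : finType) (M : market R A G C)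
    (lam : A -> R) (X : alloc R A G) (al : A -> C -> R) (p : G -> R) :
  LP_optimal M lam X -> DLP_optimal M lam al p -> LP_obj M lam X = DLP_obj M al p.
Proof.
move=> [feasX optX] [feasD optD]; apply/eqP; rewrite eq_le weak_duality // andbT.
rewrite leNgt; apply/negP => gap.
have sum_tt (F : unit -> R) : \sum_e F e = F tt by apply: big_pred1 => -[].
have viol Y : LP_feasible M Y -> exists e : unit, DLP_obj M al p < LP_obj M lam Y.
  by move=> feasY; exists tt; apply: lt_le_trans gap (optX Y feasY).
have [w [w0 [al' [p' [feasD' gap']]]]] :=
  LP_farkas (c := fun _ => lam) (th := fun _ => DLP_obj M al p) viol.
rewrite sum_tt in gap'; move/(eq_DLP_feasible (fun i => sum_tt _)): feasD' => feasD'.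
case: (ltrgtP (w tt) 0) => wtt; first by have := w0 tt; rewrite leNgt wtt.
  have [feasD'' obj''] := DLP_feasible_scale wtt feasD'.
  have := optD _ _ feasD''; rewrite obj'' ler_pdivrMr // leNgt.
  by rewrite mulrC gap'.
have := weak_duality feasX feasD'; rewrite wtt /LP_obj big1 => [|i _]; last by rewrite !mul0r.
by rewrite leNgt; move: gap'; rewrite wtt mul0r => ->.
Qed.

Section ProperPair.
Variables (R : realFieldType) (A G C : finType) (M : market R A G C).
Variables (lam : A -> R) (p : G -> R) (al : A -> C -> R).
Hypothesis hext : extensibility M.
Hypothesis lam_gt0 : forall i, 0 < lam i.
Hypothesis optD : DLP_optimal M lam al p.
Hypothesis BB_SC : forall i, BB M lam p (lam_class lam i) /\ SC M lam p (lam_class lam i).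

Lemma lam_ge0 i : 0 <= lam i. Proof. exact/ltW/lam_gt0. Qed.

(* Sort agents by [lam] and, inside each class, put those of [P] first. *)
Lemma LP_optimal_chain_through (P : {set A}) : exists X, [/\ LP_optimal M lam X,
  forall j, jointly_optimal M [set i | lam j <= lam i] X &
  forall j, jointly_optimal M ([set i | lam j < lam i] :|: (lam_class lam j :&: P)) X].
Proof.
have [X [optT levels]] := extensible_chain hext (fun i => (lam i, i \in P) : (R *l bool)%type).
have levels_lam j : jointly_optimal M [set i | lam j <= lam i] X.
  rewrite (_ : [set i | _] =
    [set i | (((lam j, false) : (R *l bool)%type) <= (lam i, i \in P))%O]); first exact: levels.
  by apply/setP => i; rewrite !inE lexi_pair implybT andbT.
exists X; split => // [|j].
  exact: LP_optimal_chain lam_ge0 (LP_feasible_jointly_optimal optT) levels_lam.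
rewrite (_ : _ :|: _ = [set i | (((lam j, true) : (R *l bool)%type) <= (lam i, i \in P))%O]).
  exact: levels.
apply/setP => i; rewrite !inE lexi_pair /=.
by case: (i \in P); case: (ltrgtP (lam i) (lam j)); rewrite ?andbF ?andbT ?orbF.
Qed.

Definition alpha_req i := \sum_k al i k * req M i k.

(* The delay agent [i] may incur if it is to pay exactly its budget. *)
Definition delay_bound i := (alpha_req i - bud M i) / lam i.

Lemma LP_optimal_slackness X : LP_optimal M lam X ->
  forall i, lam i * delay_i M X i = alpha_req i - pay_i i X p.
Proof.
move=> optX; apply: complementary_slackness optX.1 optD.1 _.
exact: strong_duality.
Qed.

Lemma delay_boundE X i : LP_optimal M lam X ->
  delay_bound i - delay_i M X i = (pay_i i X p - bud M i) / lam i.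
Proof.
move=> optX; have lam_neq0 : lam i != 0 by rewrite gt_eqF.
apply: (mulIf lam_neq0); rewrite mulrBl !divfK // mulrC LP_optimal_slackness //.
by rewrite /alpha_req; ring.
Qed.

Lemma LP_optimal_pay_sum X : LP_optimal M lam X -> \sum_i pay_i i X p = \sum_i bud M i.
Proof.
move=> optX; rewrite -!sumr_setT; apply: eq_sum_by_lam_class => i0; rewrite setTI -payS_sum.
exact: (BB_SC i0).1.
Qed.

Lemma LP_optimal_objE X : LP_optimal M lam X ->
  LP_obj M lam X = \sum_i lam i * delay_bound i.
Proof.
move=> optX; rewrite LP_objE (eq_bigr _ (fun i _ => LP_optimal_slackness optX i)).
rewrite sumrB LP_optimal_pay_sum // -sumrB; apply: eq_bigr => i _.
by rewrite /delay_bound mulrC divfK ?gt_eqF.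
Qed.

(* SC on [lam_class lam i0 :\: P] and BB on the class leave enough budget to [P]. *)
Lemma class_delay_bound (P : {set A}) i0 X : LP_optimal M lam X ->
  (forall Y, LP_optimal M lam Y -> delayS M (lam_class lam i0 :\: P) Y <=
                                    delayS M (lam_class lam i0 :\: P) X) ->
  0 <= \sum_(i in P :&: lam_class lam i0) (delay_bound i - delay_i M X i).
Proof.
move=> optX maxX; have [bb sc] := BB_SC i0.
have := sc _ (subsetDl _ _) X optX maxX; have := bb X optX.
rewrite !payS_sum /budS (big_setID P) [X in _ = X](big_setID P) /= => bbX scX.
rewrite setIC (eq_bigr _ (fun i _ => delay_boundE i optX)).
rewrite (eq_bigr (fun i => (pay_i i X p - bud M i) / lam i0)) => [|i]; last first.
  by rewrite !inE => /andP[/eqP -> _].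
by rewrite -mulr_suml divr_ge0 ?lam_ge0 // sumrB subr_ge0; lra.
Qed.

Lemma serve_within_delay_bounds (P : {set A}) :
  exists Y, feasibleS M P Y /\ delayS M P Y <= \sum_(i in P) delay_bound i.
Proof.
have [X [optX levels through]] := LP_optimal_chain_through P.
exists X; split; first exact: feasibleS_LP_feasible optX.1.
rewrite -subr_ge0 /delayS -sumrB; apply: sum_ge0_by_lam_class => i0.
apply: class_delay_bound => // Y optY.
have QL : [set i | lam i0 < lam i] :|: (lam_class lam i0 :&: P) \subset
          [set i | lam i0 <= lam i].
  by apply/subsetP => i; rewrite !inE => /orP[/ltW|/andP[/eqP -> _]].
have -> : lam_class lam i0 :\: P = [set i | lam i0 <= lam i] :\:
          ([set i | lam i0 < lam i] :|: (lam_class lam i0 :&: P)).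
  apply/setP => i; rewrite !inE.
  by case: (ltrgtP (lam i) (lam i0)); case: (i \in P).
rewrite !delayS_setD // (LP_optimal_delayS_level lam_gt0 optX optY levels).
by rewrite lerD2l lerN2; apply: (through i0).2; exact: feasibleS_LP_feasible optY.1.
Qed.

(* Otherwise Farkas yields weights [w >= 0] and a dual solution beating
   [\sum_i w i * delay_bound i], but a chain for the key [w] achieves weighted
   delay at most that. *)
Lemma exists_delay_bounded :
  exists2 X, LP_feasible M X & forall i, delay_i M X i <= delay_bound i.
Proof.
apply: NNPP => none.
have viol X : LP_feasible M X ->
    exists e, delay_bound e < \sum_i (if i == e then 1 else 0) * delay_i M X i.
  move=> feasX; case: (boolP [forall i, delay_i M X i <= delay_bound i]).
    by move=> /forallP boundX; case: none; exists X.
  by rewrite negb_forall => /existsP[e lt_e]; exists e; rewrite sumr_if_eqM mul1r ltNge.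
have [w [w0 [al' [p' [feasD' gap']]]]] := LP_farkas viol.
have wE i : \sum_e w e * (if i == e then 1 else 0) = w i.
  rewrite -(sumr_if_eq i w); apply: eq_bigr => e _.
  by rewrite eq_sym; case: eqP; rewrite ?mulr1 ?mulr0.
move/(eq_DLP_feasible wE): feasD' => feasD'.
have [Xw [optT levels]] := extensible_chain hext w.
have := weak_duality (LP_feasible_jointly_optimal optT) feasD'; apply/negP; rewrite -ltNge.
apply: le_lt_trans gap'; rewrite LP_objE; apply: ler_sum_weighted => // j.
have [Y [feasY boundY]] := serve_within_delay_bounds [set i | w j <= w i].
rewrite -delayS_level; apply: le_trans ((levels (w j)).2 Y feasY) _.
apply: le_trans boundY _; rewrite le_eqVlt; apply/orP; left.
by apply/eqP; apply: eq_bigl => i; rewrite inE.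
Qed.

Lemma LP_optimal_paying_budgets :
  exists X, LP_optimal M lam X /\ forall i, pay_i i X p = bud M i.
Proof.
have [X feasX boundX] := exists_delay_bounded.
have [X1 [optX1 _ _]] := LP_optimal_chain_through set0.
have optX : LP_optimal M lam X.
  split => // Y feasY; apply: le_trans (optX1.2 Y feasY).
  by rewrite (LP_optimal_objE optX1) LP_objE; apply: ler_sum => i _; rewrite ler_wpM2l ?lam_ge0.
have pay_ge i : bud M i <= pay_i i X p.
  have := boundX i; rewrite -subr_ge0 delay_boundE //.
  by rewrite pmulr_lge0 ?invr_gt0 // subr_ge0.
have sum0 : \sum_i (pay_i i X p - bud M i) = 0 by rewrite sumrB LP_optimal_pay_sum ?subrr.
exists X; split => // i; apply/eqP; rewrite -subr_eq0; apply/eqP.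
by apply: (psumr_eq0P _ sum0) => // j _; rewrite subr_ge0.
Qed.

End ProperPair.

Theorem lemma4p3 (R : realFieldType) (A G C : finType) (M : market R A G C)
  (hr : forall i k, 0 <= req M i k)
  (hd : forall i j, 0 <= dly M i j)
  (hm : forall i, 0 < bud M i)
  (hext : extensibility M)
  (lam : A -> R) (p : G -> R)
  (hlam : forall i, 0 < lam i)
  (hp : forall j, 0 <= p j)
  (hprop : proper_pair M lam p) :
  exists X : alloc R A G, LP_optimal M lam X /\ forall i : A, pay_i i X p = bud M i.
Proof.
have [[al optD] BB_SC] := hprop.
exact: (LP_optimal_paying_budgets hext hlam optD BB_SC).
Qed.
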